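(* For every $n\geqslant 1$, $|\mathcal{OCI}_n|=3\cdot 2^n-2n-2$.
   Context: Let $\Omega_n=\{1<2<\cdots<n\}$, $\mathcal{I}_n$ the symmetric inverse monoid on $\Omega_n$. Let $g$ be the permutation $ig=i+1$ ($1\leqslant i\leqslant n-1$), $ng=1$, $\mathcal{C}_n=\{1,g,\ldots,g^{n-1}\}$, and $\mathcal{CI}_n=\{\alpha\in\mathcal{I}_n\mid \alpha=\sigma|_{\mathrm{Dom}(\alpha)}\text{ for some }\sigma\in\mathcal{C}_n\}$. A partial injection $\alpha$ with domain $\{a_1<\cdots<a_t\}$ is order-preserving if $a_1\alpha\leqslant\cdots\leqslant a_t\alpha$. $\mathcal{OCI}_n$ is the set of all order-preserving elements of $\mathcal{CI}_n$ (including the empty transformation). *)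

(* Omega_n = {1<...<n} is modelled by 'I_n = {0<...<n-1}
   (order-isomorphic via i |-> i+1). *)
From mathcomp Require Import all_boot all_order.
Set Implicit Arguments. Unset Strict Implicit. Unset Printing Implicit Defensive.

Definition ptrans (n : nat) := {ffun 'I_n -> option 'I_n}.

Definition in_dom n (a : ptrans n) (i : 'I_n) : bool := a i != None.

Definition is_pinj n (a : ptrans n) : bool :=
  [forall i, forall j, (in_dom a i && (a i == a j)) ==> (i == j)].

Definition gpow (n : nat) (k : nat) (i : 'I_n) : nat := (i + k) %% n.

(* alpha is the restriction of some sigma in C_n = {1, g, ..., g^(n-1)} *)
Definition in_CI n (a : ptrans n) : bool :=
  is_pinj a &&
  [exists k : 'I_n, forall i, in_dom a i ==>
      (if a i is Some j then nat_of_ord j == gpow k i else false)].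

Definition order_pres n (a : ptrans n) : bool :=
  [forall i, forall j,
     [&& in_dom a i, in_dom a j & i < j] ==>
     (if a i is Some x then if a j is Some y then x <= y else false else false)].

Definition OCI (n : nat) : {set ptrans n} :=
  [set a : ptrans n | in_CI a && order_pres a].

From mathcomp Require Import all_boot all_order.
From mathcomp Require Import zify.
Set Implicit Arguments. Unset Strict Implicit. Unset Printing Implicit Defensive.

(* Points are 'I_n = {0,...,n-1} and g^k is the rotation [rot k] : i |-> (i+k) mod n.
   1. Every element of CI_n is the restriction [restr k D] of some rotation to its
      domain D, and every such restriction lies in CI_n.
   2. Let [unwrapped k] = {i | i + k < n}, the points that g^k does not wrap
      around.  g^k is increasing on [unwrapped k] and on its complement, while it
      sends every unwrapped point above every wrapped one; hence [restr k D] is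
      order-preserving iff D lies on one side of this split.
   3. A non-empty restriction determines both k and D, so OCI_n consists of the
      empty map together with a copy of the pairs (k, D) with D non-empty and
      one-sided for k.  For a fixed k there are 2^(n-k) + 2^k - 2 such D.
   4. Summing over k < n with two geometric sums gives the formula. *)

Lemma geometric_sum2 m : (\sum_(k < m) 2 ^ k).+1 = 2 ^ m.
Proof.
elim: m => [|m IH]; first by rewrite big_ord0.
by rewrite big_ord_recr /= -addSn IH expnS mul2n addnn.
Qed.

Lemma geometric_sum2_rev m : \sum_(k < m) 2 ^ (m - k) + 2 = 2 ^ m.+1.
Proof.
rewrite (reindex_inj rev_ord_inj) /=.
under eq_bigr => k _ do rewrite subKn // expnS.
by rewrite -big_distrr /= expnS -geometric_sum2 mulnS addnC.
Qed.

Lemma card_dep_pairs (I J : finType) (P : I -> {set J}) :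
  #|[set p : I * J | p.2 \in P p.1]| = \sum_i #|P i|.
Proof.
pose F i j := if j \in P i then 1 else 0.
rewrite -sum1_card big_mkcond /=.
transitivity (\sum_(p : I * J) F p.1 p.2); first by apply: eq_bigr => -[i j] _; rewrite inE.
rewrite -pair_bigA; apply: eq_bigr => i _ /=; rewrite -big_mkcond sum1_card.
by apply: eq_card => j.
Qed.

Definition one_sided (T : finType) (A : {set T}) : {set {set T}} :=
  [set D | (D != set0) && ((D \subset A) || (D \subset ~: A))].

Lemma card_one_sided (T : finType) (A : {set T}) :
  #|one_sided A| + 2 = 2 ^ #|A| + 2 ^ #|~: A|.
Proof.
have -> : one_sided A = (powerset A :|: powerset (~: A)) :\ set0.
  by apply/setP => D; rewrite !inE ?powersetE.
have common : powerset A :&: powerset (~: A) = [set set0].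
  by apply/setP => D; rewrite !inE ?powersetE -subsetI setICr subset0.
have := cardsUI (powerset A) (powerset (~: A)).
rewrite common cards1 !card_powerset.
have := cardsD1 set0 (powerset A :|: powerset (~: A)).
rewrite !inE ?powersetE sub0set /= => ->.
by rewrite add1n addn1 addn2.
Qed.

Section Rotations.
Variable n : nat.
Implicit Types (k i j : 'I_n) (D : {set 'I_n}).

Lemma ord_pos i : 0 < n.
Proof. exact: leq_ltn_trans (leq0n i) (ltn_ord i). Qed.

Definition rot k i : 'I_n := Ordinal (ltn_pmod (i + k) (ord_pos i)).

Definition unwrapped k : {set 'I_n} := [set i : 'I_n | i + k < n].

Lemma rot_val k i : val (rot k i) = if i \in unwrapped k then i + k else i + k - n.
Proof.
rewrite /= inE; case: ltnP => [/modn_small // | wrap].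
rewrite -{1}(subnK wrap) modnDr modn_small //.
by have := ltn_ord i; have := ltn_ord k; lia.
Qed.

Lemma rot_inj k : injective (rot k).
Proof.
move=> i j /(congr1 val) /eqP; rewrite eqn_modDr !modn_small // => /eqP h.
exact: val_inj.
Qed.

Lemma rot_eq_shift k k' i : rot k i = rot k' i -> k = k'.
Proof.
move=> /(congr1 val) /eqP; rewrite eqn_modDl !modn_small // => /eqP h.
exact: val_inj.
Qed.

Lemma rot_le k i j : i < j ->
  (rot k i <= rot k j) = (i \in unwrapped k) ==> (j \in unwrapped k).
Proof.
move=> ij; rewrite !rot_val !inE.
have := ltn_ord j; have := ltn_ord k.
by case: (ltnP (i + k) n); case: (ltnP (j + k) n) => /=; lia.
Qed.

Definition restr k D : ptrans n :=
  [ffun i => if i \in D then Some (rot k i) else None].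

Lemma restr_in_CI k D : in_CI (restr k D).
Proof.
apply/andP; split.
  apply/forallP => i; apply/forallP => j; apply/implyP; rewrite /in_dom !ffunE.
  by case: (i \in D); case: (j \in D) => //= /eqP/Some_inj/rot_inj ->.
apply/existsP; exists k; apply/forallP => i; rewrite /in_dom ffunE.
by case: (i \in D) => //=.
Qed.

Lemma in_CI_restr (a : ptrans n) : in_CI a -> exists k D, a = restr k D.
Proof.
case/andP => _ /existsP[k /forallP shift].
exists k, [set i | in_dom a i]; apply/ffunP => i.
rewrite ffunE inE /in_dom; move: (shift i); rewrite /in_dom.
by case: (a i) => [j|] //= /eqP hj; congr Some; apply: val_inj.
Qed.

(* [unwrapped k] is an initial segment, so a point inside it precedes every
   point outside it. *)
Lemma unwrapped_lt k i j :
  i \in unwrapped k -> j \notin unwrapped k -> i < j.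
Proof. by rewrite !inE -leqNgt; lia. Qed.

Lemma order_pres_restr k D :
  order_pres (restr k D) = (D \subset unwrapped k) || (D \subset ~: unwrapped k).
Proof.
apply/idP/idP => [pres | one_side].
  apply/negPn/negP; rewrite negb_or => /andP[/subsetPn[j jD jW] /subsetPn[i iD]].
  rewrite inE negbK => iU.
  have ij := unwrapped_lt iU jW.
  have := implyP (forallP (forallP pres i) j).
  by rewrite /in_dom !ffunE iD jD ij /= rot_le // iU (negbTE jW) => /(_ isT).
apply/forallP => i; apply/forallP => j; apply/implyP; rewrite /in_dom !ffunE.
case iD: (i \in D); case jD: (j \in D) => //= ij; rewrite rot_le //.
case/orP: one_side => /subsetP sub.
  by rewrite (sub j jD) implybT.
by move: (sub i iD); rewrite inE => /negbTE ->.
Qed.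

Lemma card_unwrapped k : #|unwrapped k| = n - k.
Proof.
have widen_inj : injective (widen_ord (leq_subr k n)).
  by move=> i j /(congr1 val) /= /val_inj.
rewrite -(card_ord (n - k)) -(card_imset _ widen_inj).
apply: eq_card => i; rewrite inE; apply/idP/imsetP => [iU | [j _ ->]].
  have i_lt : i < n - k by lia.
  by exists (Ordinal i_lt) => //; apply: val_inj.
by have := ltn_ord j; rewrite /=; lia.
Qed.

Lemma card_wrapped k : #|~: unwrapped k| = k.
Proof.
have := cardsC (unwrapped k); rewrite card_unwrapped card_ord.
by have := ltn_ord k; lia.
Qed.

(* The pairs (k, D) giving the non-empty elements of OCI_n. *)
Definition oci_codes : {set 'I_n * {set 'I_n}} :=
  [set p | p.2 \in one_sided (unwrapped p.1)].

Lemma restr_nonempty_inj : {in oci_codes &, injective (fun p => restr p.1 p.2)}.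
Proof.
move=> [k D] [k' D'] /[!inE] /andP[/set0Pn[x xD] _] _ /= same.
have := congr1 (fun a : ptrans n => a x) same; rewrite /= !ffunE xD.
case: (x \in D') => // /Some_inj/rot_eq_shift kk'; subst k'; congr pair.
apply/setP => i; have := congr1 (fun a : ptrans n => a i) same; rewrite /= !ffunE.
by case: (i \in D); case: (i \in D').
Qed.

Lemma OCI_decomp : 0 < n ->
  OCI n = [ffun=> None] |: [set restr p.1 p.2 | p in oci_codes].
Proof.
move=> n_gt0; apply/setP => a; rewrite in_setU1 inE.
apply/andP/idP => [[/in_CI_restr[k [D ->]] pres] | ].
  rewrite order_pres_restr in pres.
  have [-> | D_nz] := eqVneq D set0.
    by apply/orP; left; apply/eqP/ffunP => i; rewrite !ffunE inE.
  by apply/orP; right; apply/imsetP; exists (k, D); rewrite // !inE D_nz.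
case/orP => [/eqP -> | /imsetP[[k D] /[!inE] /andP[_ one_side] ->]].
  have -> : [ffun=> None] = restr (Ordinal n_gt0) set0.
    by apply/ffunP => i; rewrite !ffunE inE.
  by rewrite restr_in_CI order_pres_restr sub0set.
by rewrite restr_in_CI order_pres_restr.
Qed.

Lemma card_OCI : 0 < n -> #|OCI n| = 1 + \sum_(k < n) #|one_sided (unwrapped k)|.
Proof.
move=> n_gt0.
have empty_new : ([ffun=> None] : ptrans n) \notin [set restr p.1 p.2 | p in oci_codes].
  apply/imsetP => -[[k D] /[!inE] /andP[/set0Pn[x xD] _]] /ffunP /(_ x).
  by rewrite !ffunE xD.
rewrite OCI_decomp // cardsU1 empty_new card_in_imset; last exact: restr_nonempty_inj.
by rewrite -(card_dep_pairs (fun k => one_sided (unwrapped k))).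
Qed.

End Rotations.

Theorem theorem1p4 (n : nat) : 1 <= n ->
  #|OCI n| = 3 * 2 ^ n - 2 * n - 2.
Proof.
move=> n_gt0; rewrite card_OCI //.
have per_shift (k : 'I_n) : #|one_sided (unwrapped k)| + 2 = 2 ^ (n - k) + 2 ^ k.
  by rewrite card_one_sided card_unwrapped card_wrapped.
have sum_shifts : \sum_(k < n) #|one_sided (unwrapped k)| + 2 * n
                  = \sum_(k < n) 2 ^ (n - k) + \sum_(k < n) 2 ^ k.
  have two_n : 2 * n = \sum_(k < n) 2 by rewrite sum_nat_const card_ord mulnC.
  rewrite two_n -!big_split /=.
  by apply: eq_bigr => k _; rewrite per_shift.
have := geometric_sum2 n; have := geometric_sum2_rev n; rewrite expnS.
move: sum_shifts; move: (\sum_(k < n) _) (\sum_(k < n) 2 ^ (n - k)) (\sum_(k < n) 2 ^ k).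
lia.
Qed.
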